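(* Let $K$ be a finite simplicial complex, $N\subseteq K$ closed, and $\mathcal V_1,\mathcal V_2$ multivector fields on $K$. For $k\in\{1,2\}$ let $\mathcal M_k$ be a Morse decomposition of an isolated invariant set $S_k$ isolated by $N$ under $\mathcal V_k$, with Conley-Morse graph $G_k$, and let $G_{1,2}$ be the relevant Conley-Morse graph of the minimal Morse decomposition of $\mathrm{inv}_{\mathcal V_1\wedge\mathcal V_2}(N)$ under $\mathcal V_1\wedge\mathcal V_2$. Regard $G_1,G_2,G_{1,2}$ as simplicial complexes by ignoring edge orientations. Let $f_1:G_{1,2}\to G_1$ and $f_2:G_{1,2}\to G_2$ be the maps induced by $\iota_1,\iota_2$, i.e. $f_k(v)=\iota_k(v)$ on vertices and $f_k(\{u,v\})=\{\iota_k(u),\iota_k(v)\}$ on edges. Then $f_1$ and $f_2$ are simplicial maps.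
   Context: $\sigma\le\tau$ means $\sigma$ is a face of $\tau$; $\mathrm{cl}(A)$ is the set of faces of simplices of $A$; closed means $A=\mathrm{cl}(A)$. A multivector is a convex subset of $K$ w.r.t. $\le$; a multivector field is a partition of $K$ into multivectors; $[\sigma]_{\mathcal V}$ is the multivector containing $\sigma$. The intersection field is $\mathcal V_1\wedge\mathcal V_2=\{V_1\cap V_2: V_i\in\mathcal V_i\}$ (empty sets discarded). $F_{\mathcal V}(\sigma)=[\sigma]_{\mathcal V}\cup\mathrm{cl}(\sigma)$. A path under $\mathcal V$ is a sequence $\rho:\mathbb Z\cap[a,b]\to K$ with $\rho(i)\in F_{\mathcal V}(\rho(i-1))$; a solution is a bi-infinite such sequence. A multivector $V$ is critical if $H_k(\mathrm{cl}(V),\mathrm{cl}(V)\setminus V)\ne0$ for some $k$, regular otherwise. A solution $\rho$ is essential if whenever $[\rho(i)]_{\mathcal V}$ is regular there are $i^-<i<i^+$ with $[\rho(i^\pm)]_{\mathcal V}\neq[\rho(i)]_{\mathcal V}$. $\mathrm{inv}_{\mathcal V}(A)$ is the set of simplices of $A$ lying on essential solutions with image in $A$. An invariant set $S$ ($\mathrm{inv}(S)=S$) is isolated by closed $N$ if $S$ is a union of multivectors and every path in $N$ with both endpoints in $S$ lies in $S$. A Morse decomposition of $S$ is a family of mutually disjoint isolated invariant subsets (Morse sets) of $S$, indexed by a finite poset, such that every essential solution in $S$ either lies in one Morse set or has its $\alpha$-limit set in $M_q$ and $\omega$-limit set in $M_p$ with $q>p$. $S$ is minimal if $\{S\}$ is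 its only Morse decomposition; a Morse decomposition is minimal if all its Morse sets are minimal. A connection under $\mathcal V$ from $M$ to $M'$ is a path $\rho:\mathbb Z\cap[a,b]\to N$ under $\mathcal V$ with $\rho(a)\in M$, $\rho(b)\in M'$. The Conley-Morse graph of a Morse decomposition has one vertex per Morse set and a directed edge $M\to M'$ iff there is a connection from $M$ to $M'$. A Morse set $M_{1,2}$ of the minimal Morse decomposition $\mathcal M_{1,2}$ of $\mathrm{inv}_{\mathcal V_1\wedge\mathcal V_2}(N)$ is relevant if it is contained in some Morse set of $\mathcal M_1$ and in some Morse set of $\mathcal M_2$; then $\iota_k(M_{1,2})$ is the Morse set of $\mathcal M_k$ containing it. A relevant connection from relevant $M_{1,2}$ to relevant $M'_{1,2}$ is a connection $\rho$ under $\mathcal V_1\wedge\mathcal V_2$ from $M_{1,2}$ to $M'_{1,2}$ such that for $k=1,2$, whenever $\rho(i)$ lies in a Morse set $M_k\in\mathcal M_k$, $M_k\in\{\iota_k(M_{1,2}),\iota_k(M'_{1,2})\}$. The relevant Conley-Morse graph $G_{1,2}$ has the relevant Morse sets as vertices and a directed edge $M_{1,2}\to M'_{1,2}$ iff there is a relevant connection from $M_{1,2}$ to $M'_{1,2}$. A simplicial map is a vertex map sending each simplex to a simplex (an edge to an edge or a vertex). *)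

From HB Require Import structures.
From mathcomp Require Import all_boot all_order all_algebra.
Set Implicit Arguments. Unset Strict Implicit. Unset Printing Implicit Defensive.
Import GRing.Theory Num.Theory.

Section MVF.
Variable V : finType.

Definition simplicial_complex (K : {set {set V}}) : Prop :=
  set0 \notin K /\
  forall s t : {set V}, s \in K -> t \subset s -> t != set0 -> t \in K.

Definition cl (K A : {set {set V}}) : {set {set V}} :=
  [set t in K | [exists s in A, t \subset s]].

Definition closed_in (K A : {set {set V}}) : Prop := A = cl K A.

Definition convex_in (K A : {set {set V}}) : Prop :=
  A \subset K /\
  forall s t u : {set V}, s \in A -> u \in A -> t \in K ->
    s \subset t -> t \subset u -> t \in A.

Definition mvfield (K : {set {set V}}) (P : {set {set {set V}}}) : Prop :=
  partition P K /\ forall A, A \in P -> convex_in K A.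

Definition meet_field (P1 P2 : {set {set {set V}}}) : {set {set {set V}}} :=
  [set A :&: B | A in P1, B in P2] :\ set0.

Definition Fv (K : {set {set V}}) (P : {set {set {set V}}}) (s : {set V})
  : {set {set V}} := pblock P s :|: cl K [set s].

Definition step (K : {set {set V}}) (P : {set {set {set V}}}) (s t : {set V}) : bool := t \in Fv K P s.

Definition solution (K : {set {set V}}) (P : {set {set {set V}}}) (rho : int -> {set V}) : Prop :=
  forall i : int, rho i \in Fv K P (rho (i - 1)%R).

(* vertices ordered by enum_rank; oriented boundary (-1)^i for removing v_i *)
Definition sgnv (v : V) (s : {set V}) : int :=
  (-1) ^+ #|[set w in s | (enum_rank w < enum_rank v)%N]|.

(* (non-augmented) boundary of an integer chain c : simplex -> int *)
Definition bd (c : {set V} -> int) (t : {set V}) : int :=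
  if t == set0 then 0%R
  else (\sum_(v : V | v \notin t) sgnv v (v |: t) * c (v |: t))%R.

Definition is_chain (A : {set {set V}}) (k : nat) (c : {set V} -> int) : Prop :=
  forall s, c s != 0%R -> s \in A /\ #|s| = k.+1.

Definition relhom_nonzero (A B : {set {set V}}) (k : nat) : Prop :=
  exists c, [/\ is_chain A k c,
                (forall t, bd c t != 0%R -> t \in B) &
                ~ (exists d b, [/\ is_chain A k.+1 d, is_chain B k b &
                                   forall s, c s = (bd d s + b s)%R])].

Definition critical (K A : {set {set V}}) : Prop :=
  exists k, relhom_nonzero (cl K A) (cl K A :\: A) k.

Definition essential (K : {set {set V}}) (P : {set {set {set V}}}) (rho : int -> {set V}) : Prop :=
  solution K P rho /\
  forall i : int, ~ critical K (pblock P (rho i)) ->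
    (exists j : int, (j < i)%R /\ pblock P (rho j) != pblock P (rho i)) /\
    (exists j : int, (i < j)%R /\ pblock P (rho j) != pblock P (rho i)).

Definition in_inv (K : {set {set V}}) (P : {set {set {set V}}}) (A : {set {set V}}) (s : {set V}) : Prop :=
  s \in A /\ exists (rho : int -> {set V}) (i : int),
    [/\ essential K P rho, forall j, rho j \in A & rho i = s].

Definition invariant (K : {set {set V}}) (P : {set {set {set V}}}) (S : {set {set V}}) : Prop :=
  forall s, in_inv K P S s <-> s \in S.

Definition compatible (K : {set {set V}}) (P : {set {set {set V}}}) (S : {set {set V}}) : Prop :=
  S \subset K /\ forall s, s \in S -> pblock P s \subset S.

Definition isolated_by (K : {set {set V}}) (P : {set {set {set V}}}) (N S : {set {set V}}) : Prop :=
  [/\ closed_in K N, invariant K P S, compatible K P S &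
      forall x xs, path (step K P) x xs -> all (fun y => y \in N) (x :: xs) ->
        x \in S -> last x xs \in S -> all (fun y => y \in S) (x :: xs)].

Definition isolated_inv (K : {set {set V}}) (P : {set {set {set V}}}) (S : {set {set V}}) : Prop :=
  exists N, isolated_by K P N S.

(* limit sets via the V-hull (smallest locally closed V-compatible superset) *)
Definition loc_closed (K : {set {set V}}) (A : {set {set V}}) : Prop :=
  A \subset K /\ closed_in K (cl K A :\: A).

Definition alpha_lim (K : {set {set V}}) (P : {set {set {set V}}}) (rho : int -> {set V}) (s : {set V}) : Prop :=
  forall t : int, (t <= 0)%R -> forall B : {set {set V}},
    loc_closed K B -> compatible K P B ->
    (forall j : int, (j <= t)%R -> rho j \in B) -> s \in B.

Definition omega_lim (K : {set {set V}}) (P : {set {set {set V}}}) (rho : int -> {set V}) (s : {set V}) : Prop :=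
  forall t : int, (0 <= t)%R -> forall B : {set {set V}},
    loc_closed K B -> compatible K P B ->
    (forall j : int, (t <= j)%R -> rho j \in B) -> s \in B.

Definition partial_order (I : finType) (le : rel I) : Prop :=
  [/\ reflexive le, antisymmetric le & transitive le].

Definition morse_decomp (K : {set {set V}}) (P : {set {set {set V}}}) (S : {set {set V}}) (I : finType) (le : rel I)
  (M : I -> {set {set V}}) : Prop :=
  [/\ partial_order le,
      forall p q, p != q -> [disjoint M p & M q],
      forall p, M p \subset S /\ isolated_inv K P (M p) &
      forall rho, essential K P rho -> (forall j, rho j \in S) ->
        (exists p, forall j, rho j \in M p) \/
        (exists q p, [/\ le p q, p != q,
                        forall s, alpha_lim K P rho s -> s \in M q &
                        forall s, omega_lim K P rho s -> s \in M p])].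

Definition minimal_set (K : {set {set V}}) (P : {set {set {set V}}}) (S : {set {set V}}) : Prop :=
  forall (I : finType) (le : rel I) (M : I -> {set {set V}}),
    morse_decomp K P S le M -> forall p, M p = set0 \/ M p = S.

Definition minimal_morse_decomp (K : {set {set V}}) (P : {set {set {set V}}}) S (I : finType) (le : rel I)
  (M : I -> {set {set V}}) : Prop :=
  morse_decomp K P S le M /\ forall p, minimal_set K P (M p).

Definition connection (K : {set {set V}}) (P : {set {set {set V}}}) (N M M' : {set {set V}}) : Prop :=
  exists x xs, [/\ path (step K P) x xs, all (fun y => y \in N) (x :: xs),
                   x \in M & last x xs \in M'].

Definition relevant (I12 I1 I2 : finType) (M12 : I12 -> {set {set V}})
  (M1 : I1 -> {set {set V}}) (M2 : I2 -> {set {set V}}) (p : I12) : Prop :=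
  (exists q, M12 p \subset M1 q) /\ (exists q, M12 p \subset M2 q).

Definition relevant_connection (K : {set {set V}}) (P12 : {set {set {set V}}}) (N : {set {set V}}) (I12 I1 I2 : finType)
  (M12 : I12 -> {set {set V}}) (M1 : I1 -> {set {set V}}) (M2 : I2 -> {set {set V}})
  (iota1 : I12 -> I1) (iota2 : I12 -> I2) (p p' : I12) : Prop :=
  exists x xs, [/\ path (step K P12) x xs, all (fun y => y \in N) (x :: xs),
                   x \in M12 p, last x xs \in M12 p' &
                   forall y, y \in x :: xs ->
                     (forall q, y \in M1 q -> q = iota1 p \/ q = iota1 p') /\
                     (forall q, y \in M2 q -> q = iota2 p \/ q = iota2 p')].

End MVF.

(* a directed graph (vertex predicate Vt, edge relation E) seen as an
   undirected simplicial complex: vertices and 2-element edges *)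
Definition graph_simplex (I : finType) (Vt : I -> Prop) (E : I -> I -> Prop)
  (s : {set I}) : Prop :=
  (exists v, Vt v /\ s = [set v]) \/
  (exists u v, [/\ u != v, Vt u, Vt v, E u v \/ E v u & s = [set u; v]]).

Definition simplicial_map (I J : finType) (Vt1 : I -> Prop) (E1 : I -> I -> Prop)
  (Vt2 : J -> Prop) (E2 : J -> J -> Prop) (f : I -> J) : Prop :=
  forall s, graph_simplex Vt1 E1 s -> graph_simplex Vt2 E2 (f @: s).

From HB Require Import structures.
From mathcomp Require Import all_boot all_order all_algebra.

(* Every multivector of V1 /\ V2 lies inside a multivector of V1 and of V2, so
   a path under V1 /\ V2 is a path under each Vk.  Since a relevant Morse set
   M12 is contained in iota_k M12, a relevant connection from M12 to M12' is
   therefore a connection from iota_k M12 to iota_k M12' under Vk: each edge of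
   G12 is mapped to an edge of Gk or collapsed to a vertex. *)

Lemma simplicial_map_of_edges (I J : finType) (Vt1 : I -> Prop)
    (E1 : I -> I -> Prop) (Vt2 : J -> Prop) (E2 : J -> J -> Prop) (f : I -> J) :
  (forall v, Vt1 v -> Vt2 (f v)) ->
  (forall u v, Vt1 u -> Vt1 v -> E1 u v -> f u != f v -> E2 (f u) (f v)) ->
  simplicial_map Vt1 E1 Vt2 E2 f.
Proof.
move=> fVt fE s [[v [Hv ->]] | [u [v [_ Hu Hv Euv ->]]]].
  by left; exists (f v); rewrite imset_set1; split; first exact: fVt.
rewrite imsetU !imset_set1.
have [fuv | nfuv] := eqVneq (f u) (f v).
  by left; exists (f u); rewrite fuv setUid; split; first exact: fVt.
right; exists (f u), (f v); split; [done | exact: fVt | exact: fVt | | done].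
by case: Euv => E; [left; exact: fE | right; apply: fE; rewrite // eq_sym].
Qed.

Section MeetField.
Variable V : finType.
Implicit Types (K N : {set {set V}}) (P : {set {set {set V}}}).

Lemma meet_fieldC P1 P2 : meet_field P1 P2 = meet_field P2 P1.
Proof.
by rewrite /meet_field; congr (_ :\ _); apply/setP => C;
  apply/imset2P/imset2P => -[A B HA HB ->]; exists B A; rewrite // setIC.
Qed.

Lemma pblock_meet_fieldl P1 P2 s :
  trivIset P1 -> pblock (meet_field P1 P2) s \subset pblock P1 s.
Proof.
move=> triv1; rewrite {1}/pblock; case: pickP => [C /andP [HC sC] | _] /=;
  last exact: sub0set.
move: HC; rewrite in_setD1 => /andP [_ /imset2P [A B HA _ eC]].
move: sC; rewrite eC inE => /andP [sA _].
by rewrite (def_pblock triv1 HA sA) subsetIl.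
Qed.

Lemma pblock_meet_fieldr P1 P2 s :
  trivIset P2 -> pblock (meet_field P1 P2) s \subset pblock P2 s.
Proof. by rewrite meet_fieldC; exact: pblock_meet_fieldl. Qed.

Lemma step_sub K P P' :
  (forall s, pblock P s \subset pblock P' s) -> subrel (step K P) (step K P').
Proof.
move=> sPP' s t; rewrite /step /Fv !inE => /orP [Ht | ->]; last exact: orbT.
by rewrite (subsetP (sPP' s) _ Ht).
Qed.

Lemma connection_sub K N P P' (M1 M1' M2 M2' : {set {set V}}) :
  subrel (step K P) (step K P') -> M1 \subset M1' -> M2 \subset M2' ->
  connection K P N M1 M2 -> connection K P' N M1' M2'.
Proof.
move=> sstep sM1 sM2 [x [xs [pth inN xM1 lastM2]]]; exists x, xs; split=> //.
- exact: sub_path pth.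
- exact: subsetP xM1.
- exact: subsetP lastM2.
Qed.

Lemma relevant_connection_connection K N P12 (I12 I1 I2 : finType)
    (M12 : I12 -> {set {set V}}) (M1 : I1 -> {set {set V}})
    (M2 : I2 -> {set {set V}}) iota1 iota2 p p' :
  relevant_connection K P12 N M12 M1 M2 iota1 iota2 p p' ->
  connection K P12 N (M12 p) (M12 p').
Proof. by move=> [x [xs [? ? ? ? _]]]; exists x, xs. Qed.

End MeetField.

Theorem proposition25 (V : finType) (K N : {set {set V}})
  (P1 P2 : {set {set {set V}}}) (S1 S2 S12 : {set {set V}})
  (I1 I2 I12 : finType) (le1 : rel I1) (le2 : rel I2) (le12 : rel I12)
  (M1 : I1 -> {set {set V}}) (M2 : I2 -> {set {set V}})
  (M12 : I12 -> {set {set V}})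
  (iota1 : I12 -> I1) (iota2 : I12 -> I2) :
  simplicial_complex K -> closed_in K N ->
  mvfield K P1 -> mvfield K P2 ->
  isolated_by K P1 N S1 -> isolated_by K P2 N S2 ->
  morse_decomp K P1 S1 le1 M1 -> morse_decomp K P2 S2 le2 M2 ->
  (forall s, s \in S12 <-> in_inv K (meet_field P1 P2) N s) ->
  minimal_morse_decomp K (meet_field P1 P2) S12 le12 M12 ->
  (forall p, relevant M12 M1 M2 p ->
     M12 p \subset M1 (iota1 p) /\ M12 p \subset M2 (iota2 p)) ->
  simplicial_map (relevant M12 M1 M2)
    (relevant_connection K (meet_field P1 P2) N M12 M1 M2 iota1 iota2)
    (fun _ => True) (fun q q' => connection K P1 N (M1 q) (M1 q'))
    iota1 /\
  simplicial_map (relevant M12 M1 M2)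
    (relevant_connection K (meet_field P1 P2) N M12 M1 M2 iota1 iota2)
    (fun _ => True) (fun q q' => connection K P2 N (M2 q) (M2 q'))
    iota2.
Proof.
move=> _ _ [/and3P [_ triv1 _] _] [/and3P [_ triv2 _] _] _ _ _ _ _ _ sub_iota.
have step1 : subrel (step K (meet_field P1 P2)) (step K P1).
  by apply: step_sub => s; exact: pblock_meet_fieldl.
have step2 : subrel (step K (meet_field P1 P2)) (step K P2).
  by apply: step_sub => s; exact: pblock_meet_fieldr.
split; apply: simplicial_map_of_edges => // p p' relp relp'
  /relevant_connection_connection conn _; apply: connection_sub conn => //.
- exact: (sub_iota _ relp).1.
- exact: (sub_iota _ relp').1.
- exact: (sub_iota _ relp).2.
- exact: (sub_iota _ relp').2.
Qed.
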